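(* Let $H = (V,E)$ be a hypertree with $|V| = n$ such that $|e|$ is prime for each edge $e \in E$. Fix an ordering of the edges $E = \{e_1, \ldots, e_k\}$ with $|(e_{1} \cup \cdots \cup e_{i})\cap e_{i+1}| = 1$ for all $1 \leq i < k$, and fix a cyclic permutation $c_i: e_i\rightarrow e_i$ of each edge $e_i$. Then $$X_H = \sum_{\pi} F_{\mathrm{Des}_H(\pi)},$$ the sum over all bijections $\pi: V \to [n]$, where $\mathrm{Des}_H(\pi)$ is the set of $H$-descents of $\pi$ with respect to the chosen edge-ordering and cyclic permutations.
   Context: A hypergraph is a pair $H=(V,E)$ with $V$ finite and $E$ a family of subsets of $V$ with $|e|>1$. A path is a sequence $v_1, e_1, v_2, \ldots, e_m, v_{m+1}$ with $e_i \in E$, $v_i, v_{i+1} \in e_i$, edges distinct and vertices distinct except that $v_1 = v_{m+1}$ is allowed; if $v_1 = v_{m+1}$ and $m>1$ it is a cycle. A hypertree is a connected hypergraph with no cycles; between any two distinct vertices there is a unique path. $H$-descents: for a bijection $\pi: V \to [n]$ and $i \in [n-1]$, let $\pi^{-1}(i) = v_1, e_{j_1}, v_2, \ldots, e_{j_l}, v_{l+1} = \pi^{-1}(i+1)$ be the unique path, and let $j_r = \min(j_1,\ldots,j_l)$; then $i \in \mathrm{Des}_H(\pi)$ iff $\pi(c_{j_r}(v_r)) > \pi(c_{j_r}(v_{r+1}))$. A coloring $\chi: V \to \mathbb{P}=\{1,2,\ldots\}$ is proper if it is nonconstant on every edge; $X_H = \sum_\chi \prod_{v\in V} x_{\chi(v)}$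 over proper colorings. For $S \subseteq [n-1]$, $F_S = \sum x_{i_1}\cdots x_{i_n}$ over $i_1 \le \cdots \le i_n$ in $\mathbb{P}$ with $i_j < i_{j+1}$ whenever $j \in S$. *)

From HB Require Import structures.
From mathcomp Require Import all_boot all_order all_algebra all_fingroup.
From mathcomp Require Import mpoly.
From Stdlib Require Import ClassicalEpsilon.

Set Implicit Arguments.
Unset Strict Implicit.
Unset Printing Implicit Defensive.

Import GRing.Theory.

(* A hypergraph on the finite vertex type V is given by an ordered list of
   edges E = [e_1; ...; e_k] (0-based indices in Rocq).                    *)
Section Hyper.
Variable V : finType.
Implicit Types (E : seq {set V}).

Definition edge E (j : nat) : {set V} := nth set0 E j.

Definition is_hypergraph E : bool :=
  uniq E && all (fun e : {set V} => 1 < #|e|) E.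

(* A path v_1, e_{j_1}, v_2, ..., e_{j_m}, v_{m+1} is encoded by its start
   vertex a = v_1 and the list of steps [(j_1, v_2); ...; (j_m, v_{m+1})]. *)
Fixpoint steps_ok E (a : V) (st : seq (nat * V)) : bool :=
  if st is (j, v) :: st' then
    [&& j < size E, a \in edge E j, v \in edge E j & steps_ok E v st']
  else true.

(* edges distinct, vertices distinct except that v_1 = v_{m+1} is allowed *)
Definition is_path E (a : V) (st : seq (nat * V)) : bool :=
  [&& steps_ok E a st, uniq (map fst st), uniq (map snd st)
    & uniq (belast a (map snd st))].

Definition path_end (a : V) (st : seq (nat * V)) : V := last a (map snd st).

Definition is_cycle E (a : V) (st : seq (nat * V)) : bool :=
  [&& is_path E a st, path_end a st == a & 1 < size st].

Definition is_connected E : Prop :=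
  forall x y : V, x != y -> exists st, is_path E x st && (path_end x st == y).

Definition is_hypertree E : Prop :=
  [/\ is_hypergraph E, is_connected E & forall a st, ~~ is_cycle E a st].

(* c is a cyclic permutation of the set e (extended by the identity off e) *)
Definition is_cyclic_perm_of (e : {set V}) (c : {perm V}) : bool :=
  perm_on e c && [forall x in e, porbit c x == e].

(* H-descents of p : V -> [n] (positions 0-based: i stands for i+1).
   i is a descent iff, along the (unique, in a hypertree) path from
   p^-1(i) to p^-1(i+1), with r the position of the edge of minimal index
   j_r, we have p (c_{j_r} v_r) > p (c_{j_r} v_{r+1}).                      *)
Definition desH E (c : nat -> {perm V}) (n : nat) (p : {ffun V -> 'I_n})
    (i : nat) : Prop :=
  i.+1 < n /\
  exists (a b : V) (st : seq (nat * V)),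
    [/\ val (p a) = i, val (p b) = i.+1, is_path E a st, path_end a st = b &
      let js := map fst st in
      let jmin := foldr minn (head 0 js) js in
      let r := index jmin js in
      let vs := a :: map snd st in
      val (p (c jmin (nth a vs r))) > val (p (c jmin (nth a vs r.+1)))].

(* proper colorings with colors in 'I_m (standing for {1,...,m}) *)
Definition proper E (m : nat) (chi : {ffun V -> 'I_m}) : bool :=
  all (fun e : {set V} => [exists x in e, exists y in e, chi x != chi y]) E.

(* chromatic symmetric function X_H in the variables x_1, ..., x_m
   (i.e. with x_{m+1} = x_{m+2} = ... = 0) *)
Definition XH E (m : nat) : {mpoly int[m]} :=
  \sum_(chi : {ffun V -> 'I_m} | proper E chi) \prod_(v : V) 'X_(chi v).

End Hyper.

Definition pbool (P : Prop) : bool :=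
  if excluded_middle_informative P then true else false.

(* fundamental quasisymmetric function F_S (S a subset of the 0-based
   positions {0,...,n-2}) in the variables x_1, ..., x_m *)
Definition fund_ok (S : nat -> Prop) (t : seq nat) : Prop :=
  forall j, j.+1 < size t ->
    nth 0 t j <= nth 0 t j.+1 /\ (S j -> nth 0 t j < nth 0 t j.+1).

Definition Fq (n m : nat) (S : nat -> Prop) : {mpoly int[m]} :=
  \sum_(s : n.-tuple 'I_m | pbool (fund_ok S (map val s))) \prod_(x <- s) 'X_x.

(* A colouring chi contributes to F_{Des_H(p)} iff it increases weakly along p^-1 and
   strictly at the H-descents of p; call p compatible with chi.  It suffices to show that
   a proper chi has exactly one compatible p and an improper chi has none.
   The H-descent at i only depends on the edge e_f of least index on the path from
   p^-1(i) to p^-1(i+1): it compares the positions of c_f applied to the gates of these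
   two vertices in e_f.  Give each vertex z the key made of chi z followed, for every
   edge f, by the colours along the c_f-orbit of the gate of z in e_f.
   If chi is proper, distinct vertices have distinct keys: a colouring of a cycle of
   prime length that is invariant under a nontrivial rotation is constant.  A compatible
   p must then order the vertices lexicographically by key, and that order is compatible.
   If e_j0 is the first monochromatic edge, replacing the j0-block of the keys by the
   position under p of c_j0 of the gate shows that c_j0 would have to reflect the order
   p on e_j0, which no cyclic permutation of a set of size > 1 does. *)

From Pilot Require Import Defs.
From HB Require Import structures.
From mathcomp Require Import all_boot all_order all_algebra all_fingroup.
From mathcomp Require Import mpoly.
From Stdlib Require Import ClassicalEpsilon.

Set Implicit Arguments.
Unset Strict Implicit.
Unset Printing Implicit Defensive.

Import GRing.Theory.

Lemma succ_neq (T : eqType) (p : T -> nat) z z' : p z' = (p z).+1 -> z != z'.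
Proof. by move=> pz; apply/eqP => zz; move: pz; rewrite zz => /eqP; rewrite eqn_leq ltnn andbF. Qed.

Lemma pboolP (P : Prop) : reflect P (pbool P).
Proof. by rewrite /pbool; case: excluded_middle_informative => h; constructor. Qed.

Lemma card_ord_lt n k : k <= n -> #|[set i : 'I_n | i < k]| = k.
Proof.
move=> kn; have -> : [set i : 'I_n | i < k] = widen_ord kn @: [set: 'I_k].
  apply/setP => i; rewrite inE; apply/idP/imsetP => [ik | [j _ ->]]; last by rewrite /= ltn_ord.
  by exists (Ordinal ik); rewrite ?inE //; apply: val_inj.
by rewrite card_imset ?cardsT ?card_ord // => a b /(congr1 val) /= /val_inj.
Qed.

Lemma ffun_ord_onto (V : finType) (p : {ffun V -> 'I_#|V|}) : injective p ->
  forall i, i < #|V| -> exists x, p x = i :> nat.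
Proof.
move=> pinj i iV; have [q _ pq] := inj_card_bij pinj (eq_leq (card_ord _)).
by exists (q (Ordinal iV)); rewrite pq.
Qed.

Lemma ffun_ord_rank (V : finType) (p : {ffun V -> 'I_#|V|}) : injective p ->
  forall x, p x = #|[set y | p y < p x]| :> nat.
Proof.
move=> pinj x; have bp : bijective p by apply: inj_card_bij pinj _; rewrite card_ord.
have -> : [set y | p y < p x] = p @^-1: [set i : 'I_#|V| | i < p x].
  by apply/setP => y; rewrite !inE.
rewrite on_card_preimset ?card_ord_lt //; [exact: ltnW | exact: onW_bij].
Qed.

Section Walks.
Variable V : finType.
Variable E : seq {set V}.
Local Notation e := (edge E).

Definition adj (F : pred nat) : rel V :=
  fun x y => [exists j : 'I_(size E), [&& F j, x \in e j & y \in e j]].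

Lemma adjP (F : pred nat) x y :
  reflect (exists j, [/\ F j, j < size E, x \in e j & y \in e j]) (adj F x y).
Proof.
apply: (iffP existsP) => [[j /and3P[Fj hx hy]] | [j [Fj jl hx hy]]].
  by exists j.
by exists (Ordinal jl); rewrite /= Fj hx hy.
Qed.

Lemma adj_sym (F : pred nat) : ssrbool.symmetric (adj F).
Proof.
move=> x y; apply/adjP/adjP => -[j [Fj jl hx hy]]; by exists j.
Qed.

Lemma connect_adj_sym (F : pred nat) : connect_sym (adj F).
Proof. exact/sym_connect_sym/adj_sym. Qed.

Lemma connect_adj1 (F : pred nat) j x y :
  F j -> j < size E -> x \in e j -> y \in e j -> connect (adj F) x y.
Proof. by move=> Fj jl hx hy; apply/connect1/adjP; exists j. Qed.

Lemma steps_ok_cat a s1 s2 :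
  steps_ok E a (s1 ++ s2) = steps_ok E a s1 && steps_ok E (path_end a s1) s2.
Proof. by elim: s1 a => [|[j v] s1 IH] a //=; rewrite IH /path_end /= !andbA. Qed.

Lemma connect_steps (F : pred nat) a st :
  steps_ok E a st -> all F (map fst st) -> connect (adj F) a (path_end a st).
Proof.
elim: st a => [|[j v] st IH] a /=; first by rewrite connect0.
case/and4P=> jl ha hv hs /andP[Fj Fs].
exact: connect_trans (connect_adj1 Fj jl ha hv) (IH v hs Fs).
Qed.

Fixpoint simple_path (a : V) (st : seq (nat * V)) : bool :=
  if st is (j, v) :: st' then
    [&& j < size E, a \in e j, v \in e j, a \notin v :: map snd st',
        j \notin map fst st' & simple_path v st']
  else true.

Lemma simple_pathE a st :
  simple_path a st =
    [&& steps_ok E a st, uniq (a :: map snd st) & uniq (map fst st)].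
Proof.
elim: st a => [|[j v] st IH] a //=.
by rewrite IH /= -!andbA; do !bool_congr; rewrite andbCA.
Qed.

Lemma simple_path_drop a s1 s2 :
  simple_path a (s1 ++ s2) -> simple_path (path_end a s1) s2.
Proof.
by elim: s1 a => [|[j v] s1 IH] a //= /and5P[_ _ _ _ /andP[_ /IH]].
Qed.

Lemma is_path_simple a st : is_path E a st -> path_end a st != a -> simple_path a st.
Proof.
case/and4P=> hs hf hsnd; rewrite simple_pathE hs hf andbT /path_end.
case/lastP: (map snd st) hsnd => [|s y] //.
rewrite belast_rcons last_rcons /= => ur /andP[has us] ya.
by rewrite mem_rcons inE negb_or eq_sym ya has ur.
Qed.

(* Both a repeated vertex and a repeated edge allow a walk to be shortcut. *)
Lemma connect_simple_path (F : pred nat) x y : connect (adj F) x y ->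
  exists st, [/\ simple_path x st, path_end x st = y & all F (map fst st)].
Proof.
case/connectP=> q; elim: q x => [|u q IH] x /=; first by move=> _ ->; exists [::].
case/andP=> /adjP[j [Fj jl hx hu]] /IH {}IH /IH[Q [sQ eQ fQ]].
have endQ s1 s2 : Q = s1 ++ s2 -> path_end (path_end u s1) s2 = y.
  by move=> defQ; rewrite -eQ defQ /path_end map_cat last_cat.
have allQ s1 s2 : Q = s1 ++ s2 -> all F (map fst s2).
  by move=> defQ; move: fQ; rewrite defQ map_cat all_cat => /andP[].
case xQ: (x \in u :: map snd Q).
  case/predU1P: xQ => [-> | /mapP[[j' v] jvQ /= xv]]; first by exists Q.
  case/splitPr: jvQ sQ endQ allQ => s1 s2 sQ endQ allQ.
  have defQ : s1 ++ (j', v) :: s2 = rcons s1 (j', v) ++ s2 by rewrite cat_rcons.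
  have -> : x = path_end u (rcons s1 (j', v)) by rewrite /path_end map_rcons last_rcons.
  exists s2; split; [| exact: endQ _ _ defQ | exact: allQ _ _ defQ].
  by apply: simple_path_drop; rewrite -defQ.
case jQ: (j \in map fst Q).
  case/mapP: jQ => [[j' v] jvQ /= jj']; case/splitPr: jvQ sQ xQ endQ allQ.
  move=> s1 s2 sQ xQ endQ allQ; subst j'.
  have /= /and5P[_ _ hv _ /andP[js2 ss2]] := simple_path_drop sQ.
  exists ((j, v) :: s2); split; last 2 first.
  - exact: endQ s1 _ erefl.
  - by rewrite /= Fj; have /= /andP[] := allQ s1 _ erefl.
  rewrite /= jl hx hv js2 ss2 !andbT; apply: contraFN xQ.
  by rewrite !inE map_cat mem_cat /= inE => /orP[] ->; rewrite ?orbT.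
by exists ((j, u) :: Q); rewrite /= jl hx hu xQ jQ sQ Fj.
Qed.

End Walks.

Section Hypertree.
Variable V : finType.
Variable E : seq {set V}.
Hypothesis htree : is_hypertree E.
Local Notation e := (edge E).
Local Notation avoid f := (adj E (predC1 f)).

Lemma edge_card_gt1 f : f < size E -> 1 < #|e f|.
Proof. by case: htree => /andP[_ /allP hE] _ _ fl; apply: hE; rewrite mem_nth. Qed.

Lemma edge_neq_elt f x : f < size E -> exists2 y, y \in e f & y != x.
Proof.
move/edge_card_gt1/card_gt1P=> [y1 [y2 [hy1 hy2 y12]]].
by case: (eqVneq y1 x) => [<- | ]; [exists y2; rewrite // eq_sym | exists y1].
Qed.

Lemma connect_hypertree x y : connect (adj E predT) x y.
Proof.
case: (eqVneq x y) => [-> | xy]; first exact: connect0.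
have [_ /(_ x y xy)[st /andP[/and4P[ok _ _ _] /eqP <-]] _] := htree.
exact: connect_steps ok (all_predT _).
Qed.

(* A walk avoiding f between two vertices of e f closes up into a cycle through f. *)
Lemma connect_avoid_edge f x y : f < size E -> x \in e f -> y \in e f ->
  connect (avoid f) x y -> x = y.
Proof.
move=> fl hx hy /connect_simple_path[st [sp ep fa]].
apply/eqP/negPn/negP => xy; have [_ _ /(_ x (rcons st (f, x)))] := htree.
apply/negP/negPn; have stn : st != [::] by case: (st) ep xy => //= <-; rewrite eqxx.
move: sp; rewrite simple_pathE => /and3P[so ux uf].
apply/and3P; split.
- apply/and4P; split.
  + by rewrite -cats1 steps_ok_cat so ep /= fl hx hy.
  + rewrite map_rcons rcons_uniq uf andbT.
    by apply/negP => /(allP fa) /=; rewrite eqxx.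
  + by rewrite map_rcons rcons_uniq.
  + by rewrite map_rcons belast_rcons.
- by rewrite /path_end map_rcons last_rcons.
- by rewrite size_rcons ltnS lt0n size_eq0.
Qed.

(* Unique by connect_avoid_edge; the default z is only returned when e f is empty. *)
Definition gate f z : V := odflt z [pick x in e f | connect (avoid f) z x].

Lemma exists_avoid_edge f z : f < size E ->
  exists2 x, x \in e f & connect (avoid f) z x.
Proof.
move=> fl; have [y hy _] := edge_neq_elt z fl.
case/connectP: (connect_hypertree z y) => q; elim: q z => [|u q IH] z /=.
  by move=> _ <-; exists y; rewrite ?connect0.
case/andP=> /adjP[j [_ jl hz hu]] /IH{}IH /IH[x hx ux].
case: (eqVneq j f) => [<- | jf]; first by exists z; rewrite ?connect0.
by exists x; rewrite // (connect_trans _ ux) // (connect_adj1 _ jl hz hu).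
Qed.

Lemma gate_spec f z : f < size E ->
  gate f z \in e f /\ connect (avoid f) z (gate f z).
Proof.
move=> fl; rewrite /gate; case: pickP => /= [x /andP[hx zx] // | none].
have [x hx zx] := exists_avoid_edge z fl.
by have := none x; rewrite /= hx zx.
Qed.

Lemma gate_mem f z : f < size E -> gate f z \in e f.
Proof. by move=> fl; case: (gate_spec z fl). Qed.

Lemma gate_connect f a b : f < size E -> connect (avoid f) a b -> gate f a = gate f b.
Proof.
move=> fl ab; have [ha ca] := gate_spec a fl; have [hb cb] := gate_spec b fl.
apply: connect_avoid_edge fl ha hb _.
rewrite connect_adj_sym in ca; exact: connect_trans ca (connect_trans ab cb).
Qed.

Lemma gate_id f z : f < size E -> z \in e f -> gate f z = z.
Proof.
move=> fl hz; have [h c] := gate_spec z fl.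
by apply/esym; apply: connect_avoid_edge fl hz h c.
Qed.

(* f is the j_r of the definition of H-descents for the path from a to b (path_min_edge). *)
Definition first_sep a b f :=
  [/\ f < size E, forall g, g < f -> gate g a = gate g b & gate f a != gate f b].

Lemma first_sep_uniq a b f f' : first_sep a b f -> first_sep a b f' -> f = f'.
Proof.
case=> _ h1 n1 [_ h2 n2]; case: (ltngtP f f') => // lt.
- by rewrite h2 ?eqxx in n1.
- by rewrite h1 ?eqxx in n2.
Qed.

Lemma first_sep_sym a b f : first_sep a b f -> first_sep b a f.
Proof. by case=> fl below nsep; split=> [| g /below -> | ]; rewrite // eq_sym. Qed.

Lemma first_sep_edge f x y : f < size E -> x \in e f -> y \in e f -> x != y ->
  first_sep x y f.
Proof.
move=> fl hx hy xy; split => //; last by rewrite !gate_id.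
move=> g gf; apply: (gate_connect (ltn_trans gf fl)).
by apply: connect_adj1 fl hx hy; rewrite /= neq_ltn gf orbT.
Qed.

Lemma foldr_minn_mem a s : foldr minn a s \in a :: s.
Proof.
elim: s => [|x s IH] /=; first exact: mem_head.
case: leqP => _; first by rewrite !inE eqxx orbT.
by move: IH; rewrite !inE => /orP[] ->; rewrite ?orbT.
Qed.

Lemma foldr_minn_le a s j : j \in a :: s -> foldr minn a s <= j.
Proof.
elim: s j => [|x s IH] j /=; first by rewrite inE => /eqP->.
rewrite geq_min !inE => /or3P[/eqP-> | /eqP-> | js].
- by rewrite IH ?mem_head ?orbT.
- by rewrite leqnn.
- by rewrite IH ?inE ?js ?orbT.
Qed.

Lemma path_min_split (a : V) s1 f v s2 : let st := s1 ++ (f, v) :: s2 in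
  simple_path E a st -> (forall j, j \in map fst st -> f <= j) ->
  [/\ first_sep a (path_end a st) f, gate f a = path_end a s1 & gate f (path_end a st) = v].
Proof.
move=> st sp fle.
have /= /and5P[fl hu hv /norP[uv _] /andP[f_s2 sp2]] := simple_path_drop sp.
have := sp; rewrite simple_pathE steps_ok_cat /st !map_cat cat_uniq /= => /and3P[/andP[ok1 _] _].
case/and4P=> _ /norP[f_s1 _] _ _.
have eb : path_end a st = path_end v s2 by rewrite /path_end map_cat last_cat.
have avoid_f s : f \notin map fst s -> all (predC1 f) (map fst s).
  by move=> fs; apply/allP => j js; apply: contraNneq fs => <-.
have pa : gate f a = path_end a s1.
  by rewrite -(gate_id fl hu); apply/gate_connect/connect_steps/avoid_f.
have pb : gate f (path_end a st) = v.
  rewrite eb -{2}(gate_id fl hv); apply/esym/gate_connect => //.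
  by apply/connect_steps/avoid_f; move: sp2; rewrite simple_pathE => /andP[].
split; rewrite ?pa ?pb //; split; rewrite ?pa ?pb // => g gf.
apply: (gate_connect (ltn_trans gf fl)); apply: connect_steps.
  by move: sp; rewrite simple_pathE => /andP[].
by apply/allP => j /fle fj; apply: contraTneq gf => <-; rewrite -leqNgt.
Qed.

Lemma path_min_edge a st : is_path E a st -> path_end a st != a ->
  let js := map fst st in let f := foldr minn (head 0 js) js in
  let vs := a :: map snd st in
  [/\ first_sep a (path_end a st) f, gate f a = nth a vs (index f js)
    & gate f (path_end a st) = nth a vs (index f js).+1].
Proof.
move=> ip ne /=; have sp := is_path_simple ip ne.
have fmem := foldr_minn_mem (head 0 (map fst st)) (map fst st).
have fle j : j \in map fst st -> foldr minn (head 0 (map fst st)) (map fst st) <= j.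
  by move=> hj; apply: foldr_minn_le; rewrite inE hj orbT.
move: (foldr minn _ _) fmem fle => f fmem fle.
have : f \in map fst st.
  case/predU1P: fmem => [-> | //].
  by case: (st) ne => [|[j v] s] /=; [rewrite eqxx | rewrite mem_head].
case/mapP=> -[f' v] fv_st /= ff'; subst f'; clear ip ne fmem.
move: sp fle; case/splitPr: fv_st => s1 s2 sp fle.
have [sep pa pb] := path_min_split sp fle.
have f_s1 : f \notin map fst s1.
  move: sp; rewrite simple_pathE => /and3P[_ _].
  by rewrite map_cat cat_uniq /= => /and3P[_ /norP[]].
rewrite !map_cat index_cat (negPf f_s1) /= eqxx addn0 size_map pa pb; split => //.
- have nth_end (b : V) l t : nth a (b :: l ++ t) (size l) = last b l.
    by elim: l b => //= y l IH b; rewrite IH.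
  by rewrite -(size_map snd) nth_end.
- by rewrite nth_cat size_map ltnn subnn.
Qed.

Lemma desH_first_sep (c : nat -> {perm V}) n (p : {ffun V -> 'I_n}) a b f :
  injective p -> p b = (p a).+1 :> nat -> first_sep a b f ->
  desH E c p (p a) <-> p (c f (gate f b)) < p (c f (gate f a)).
Proof.
move=> pinj pab sep.
have ab : a != b := succ_neq (p := fun x => val (p x)) pab.
have along st : is_path E a st -> path_end a st = b ->
    (let js := map fst st in let jmin := foldr minn (head 0 js) js in
     let r := index jmin js in let vs := a :: map snd st in
     p (c jmin (nth a vs r)) > p (c jmin (nth a vs r.+1)))
    = (p (c f (gate f b)) < p (c f (gate f a))).
  move=> ip eb; have /= := path_min_edge ip; rewrite eb eq_sym => /(_ ab)[sep' pa pb].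
  by rewrite /= -pa -pb (first_sep_uniq sep' sep).
split=> [[_ [a' [b' [st [pa' pb' ip eb des]]]]] | des].
  have a'a : a' = a by apply/pinj/val_inj.
  have b'b : b' = b by apply/pinj/val_inj; rewrite /= pb' pab.
  by subst a' b'; rewrite -(along _ ip b'b).
split; first by rewrite -pab ltn_ord.
have [_ /(_ a b ab)[st /andP[ip /eqP eb]] _] := htree.
rewrite -(along _ ip eb) in des; by exists a, b, st.
Qed.

End Hypertree.

Definition monochromatic (V : finType) (T : eqType) (col : V -> T) (e : {set V}) :=
  {in e &, forall x y, col x = col y}.

Section CyclicPerm.
Variables (V : finType) (e : {set V}) (s : {perm V}).
Hypothesis s_cyc : is_cyclic_perm_of e s.

Lemma cyclic_perm_mem x : (s x \in e) = (x \in e).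
Proof. by case/andP: s_cyc => /perm_closed. Qed.

Lemma iter_cyclic_perm_mem k x : x \in e -> iter k s x \in e.
Proof. by move=> hx; elim: k => //= k IH; rewrite cyclic_perm_mem. Qed.

Lemma porbit_cyclic_perm x : x \in e -> porbit s x = e.
Proof. by move=> hx; case/andP: s_cyc => _ /forall_inP/(_ x hx)/eqP. Qed.

Lemma iter_cyclic_perm_period q x : x \in e -> iter (q * #|e|) s x = x.
Proof.
move=> hx; elim: q => // q IH; rewrite mulSn iterD IH.
by rewrite -{1}(porbit_cyclic_perm hx) iter_porbit.
Qed.

Lemma iter_cyclic_perm_mod k x : x \in e -> iter k s x = iter (k %% #|e|) s x.
Proof.
move=> hx; rewrite {1}(divn_eq k #|e|) iterD iter_cyclic_perm_period //.
exact: iter_cyclic_perm_mem.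
Qed.

Lemma cyclic_perm_orbit x y : x \in e -> y \in e -> exists k, y = iter k s x.
Proof.
move=> hx; rewrite -(porbit_cyclic_perm hx) => /porbitP[k ->].
by exists k; rewrite permX.
Qed.

(* Two distinct points of a cycle of prime length p are s^k apart with k coprime to p,
   so a colouring that cannot tell their orbits apart is invariant under s^k, hence under s. *)
Lemma prime_cycle_orbits_eq (T : eqType) (col : V -> T) x y :
  prime #|e| -> x \in e -> y \in e -> x != y ->
  (forall t, col (iter t s x) = col (iter t s y)) -> monochromatic col e.
Proof.
move=> pr hx hy xy same; have e_gt0 := prime_gt0 pr.
have [k0 yk0] := cyclic_perm_orbit hx hy.
rewrite (iter_cyclic_perm_mod _ hx) in yk0; set k := k0 %% #|e| in yk0.
have k_gt0 : 0 < k by rewrite lt0n; apply: contraNneq xy => k0E; rewrite yk0 k0E.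
have cop : coprime #|e| k by rewrite prime_coprime // gtnNdvd // ltn_pmod.
have shift t : col (iter (t + k) s x) = col (iter t s x) by rewrite iterD -yk0 same.
have shiftM q t : col (iter (t + q * k) s x) = col (iter t s x).
  by elim: q t => [|q IH] t; rewrite ?addn0 // mulSn addnA addnAC shift IH.
have [a _ /dvdnP[q hq]] := Bezoutl k e_gt0; rewrite (eqP cop) in hq.
have step t : col (iter t.+1 s x) = col (iter t s x).
  by rewrite -(shiftM a t.+1) -addn1 -addnA [1 + _]hq iterD iter_cyclic_perm_period.
have const t : col (iter t s x) = col x by elim: t => // t IH; rewrite step.
move=> u v hu hv; have [i ->] := cyclic_perm_orbit hx hu.
by have [j ->] := cyclic_perm_orbit hx hv; rewrite !const.
Qed.

Lemma prime_cycle_first_diff (T : eqType) (col : V -> T) x y :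
  prime #|e| -> ~ monochromatic col e -> x \in e -> y \in e -> x != y ->
  exists t, [/\ t < #|e|, forall i, i < t -> col (iter i s x) = col (iter i s y)
              & col (iter t s x) != col (iter t s y)].
Proof.
move=> pr nmono hx hy xy.
have [t0 lt0 dt0] : exists2 t, t < #|e| & col (iter t s x) != col (iter t s y).
  case: (boolP [exists t : 'I_#|e|, col (iter t s x) != col (iter t s y)]).
    by case/existsP=> t dt; exists t.
  move/existsPn=> same; exfalso; apply: nmono; apply: (prime_cycle_orbits_eq pr hx hy xy) => t.
  rewrite (iter_cyclic_perm_mod _ hx) (iter_cyclic_perm_mod _ hy).
  exact/eqP/negbNE/(same (Ordinal (ltn_pmod t (prime_gt0 pr)))).
have ex : exists t, col (iter t s x) != col (iter t s y) by exists t0.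
case: (ex_minnP ex) => t dt tmin; exists t; split => //.
- exact: leq_ltn_trans (tmin _ dt0) lt0.
- by move=> i it; apply/eqP; apply: contraTT it => /tmin; rewrite -leqNgt.
Qed.

(* The p-maximal point a of e satisfies p (s a) < p a = p (s (s^-1 a)) unless s a = a. *)
Lemma cyclic_perm_not_reflecting (p : V -> nat) : 1 < #|e| -> injective p ->
  ~ {in e &, forall a b, p (s a) < p (s b) -> p a < p b}.
Proof.
move=> e_gt1 pinj refl; have [x0 hx0] : exists x, x \in e.
  by have /card_gt1P[x [_ [hx _ _]]] := e_gt1; exists x.
case: (arg_maxnP p hx0) => a ha amax.
have hb : (s^-1)%g a \in e by rewrite -cyclic_perm_mem permKV.
have fix_a : s a = a.
  apply: contraTeq (amax _ hb) => sa; rewrite -ltnNge.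
  have hsa : s a \in e by rewrite cyclic_perm_mem.
  have le_sa : p (s a) <= p a := amax _ hsa.
  apply: refl => //; rewrite permKV ltn_neqAle le_sa andbT.
  by apply: contra sa => /eqP/pinj ->.
have [y hy ya] : exists2 y, y \in e & y != a.
  have /card_gt1P[y1 [y2 [hy1 hy2 y12]]] := e_gt1.
  by case: (eqVneq y1 a) => [<- | ]; [exists y2; rewrite // eq_sym | exists y1].
have [k yk] := cyclic_perm_orbit ha hy.
have iter_a i : iter i s a = a by elim: i => //= i ->.
by move: ya; rewrite yk iter_a eqxx.
Qed.

End CyclicPerm.

Section LexOrder.
Implicit Types (F G H : nat -> nat).

Definition eq_upto k F G := forall i, i < k -> F i = G i.

Definition lex_lt k F G := exists i, [/\ i < k, eq_upto i F G & F i < G i].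

Lemma eq_upto_sym k F G : eq_upto k F G -> eq_upto k G F.
Proof. by move=> h i /h. Qed.

Lemma first_diff_uniq F G i j :
  eq_upto i F G -> F i != G i -> eq_upto j F G -> F j != G j -> i = j.
Proof.
move=> ei ni ej nj; case: (ltngtP i j) => // ij.
- by rewrite ej ?eqxx in ni.
- by rewrite ei ?eqxx in nj.
Qed.

Lemma lex_lt_irr k F : ~ lex_lt k F F.
Proof. by case=> i [_ _]; rewrite ltnn. Qed.

Lemma lex_lt_le k k' F G : k <= k' -> lex_lt k F G -> lex_lt k' F G.
Proof. by move=> kk [i [ik e l]]; exists i; split => //; apply: leq_trans kk. Qed.

Lemma lex_lt_trans k F G H : lex_lt k F G -> lex_lt k G H -> lex_lt k F H.
Proof.
case=> i [ik e1 l1] [j [jk e2 l2]]; case: (ltngtP i j) => ij.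
- exists i; split => // [l li | ]; last by rewrite -(e2 _ ij).
  by rewrite e1 // e2 // (ltn_trans li ij).
- exists j; split => // [l lj | ]; last by rewrite (e1 _ ij).
  by rewrite e1 ?e2 // (ltn_trans lj ij).
- subst j; exists i; split; [done | by move=> l li; rewrite e1 ?e2 | exact: ltn_trans l1 l2].
Qed.

Lemma lex_lt_eq_upto k F G H : lex_lt k F G -> eq_upto k G H -> lex_lt k F H.
Proof.
case=> i [ik e l] eGH; exists i; split => //; last by rewrite -eGH.
by move=> j ji; rewrite e // eGH // (ltn_trans ji ik).
Qed.

Lemma lex_ltS k F G :
  lex_lt k.+1 F G -> lex_lt k F G \/ eq_upto k F G /\ F k < G k.
Proof.
case=> i [ik e l]; rewrite ltnS leq_eqVlt in ik.
by case/predU1P: ik => [<- | ik]; [right | left; exists i].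
Qed.

Lemma lex_lt_total k F G : [\/ lex_lt k F G, lex_lt k G F | eq_upto k F G].
Proof.
elim: k => [|k [h | h | h]]; first by apply: Or33.
- by apply/Or31/(lex_lt_le (leqnSn k)).
- by apply/Or32/(lex_lt_le (leqnSn k)).
case: (ltngtP (F k) (G k)) => hk.
- by apply: Or31; exists k.
- by apply: Or32; exists k; split => // i /h.
- by apply: Or33 => i; rewrite ltnS leq_eqVlt => /predU1P[-> | /h].
Qed.

Lemma lex_lt_first_diff k i F G :
  lex_lt k F G -> eq_upto i F G -> F i != G i -> F i < G i.
Proof.
case=> j [_ e l] ei ni.
by rewrite -(first_diff_uniq e _ ei ni) // neq_ltn l.
Qed.

End LexOrder.

Section LexOrderRank.
Variables (T : finType) (p : {ffun T -> 'I_#|T|}) (K : T -> nat -> nat).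
Hypothesis p_inj : injective p.

(* If some pair is out of order, walking from y to x in p-order finds an adjacent one. *)
Lemma adjacent_lex_descent k x y : p y <= p x -> lex_lt k (K x) (K y) ->
  exists z z', p z' = (p z).+1 :> nat /\ lex_lt k (K z') (K z).
Proof.
move=> /subnKC; move: (p x - p y) => d; elim: d y => [|d IH] y.
  by rewrite addn0 => /ord_inj/p_inj <- /lex_lt_irr.
move=> dxy lxy; have [z'' pz''] : exists z'', p z'' = (p y).+1 :> nat.
  apply: ffun_ord_onto => //; apply: leq_trans (ltn_ord (p x)).
  by rewrite ltnS -dxy addnS ltnS leq_addr.
have dx : p z'' + d = p x by rewrite pz'' addSn -addnS.
case: (lex_lt_total k (K z'') (K y)) => h; first by exists y, z''.
- exact: IH dx (lex_lt_trans lxy h).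
- exact: IH dx (lex_lt_eq_upto lxy (eq_upto_sym h)).
Qed.

Variable L : nat.
Hypothesis no_adjacent_descent : forall m, m < L ->
  (forall x y, lex_lt m (K x) (K y) -> p x < p y) ->
  forall z z', p z' = (p z).+1 :> nat -> eq_upto m (K z') (K z) -> K z' m < K z m -> False.

Lemma lex_lt_rank x y : lex_lt L (K x) (K y) -> p x < p y.
Proof.
suff lex_rank m : m <= L -> forall x y, lex_lt m (K x) (K y) -> p x < p y by exact: lex_rank.
elim: m => [|m IH] mL {}x {}y; first by case=> i [].
have {}IH := IH (ltnW mL).
case/lex_ltS=> [/IH // | [e l]]; rewrite ltnNge; apply/negP => yx.
have lxy : lex_lt m.+1 (K x) (K y) by exists m.
have [z [z' [adj /lex_ltS[/IH | [e' l']]]]] := adjacent_lex_descent yx lxy.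
  by rewrite adj ltnNge leqnSn.
exact: no_adjacent_descent mL IH _ _ adj e' l'.
Qed.

End LexOrderRank.

Definition compatible (V : finType) n (S : nat -> Prop) (col : V -> nat)
    (p : {ffun V -> 'I_n}) :=
  forall z z', p z' = (p z).+1 :> nat -> col z <= col z' /\ (col z = col z' -> ~ S (p z)).

Section Keys.
Variables (V : finType) (E : seq {set V}) (c : nat -> {perm V}) (col : V -> nat).
Hypothesis htree : is_hypertree E.
Hypothesis hprime : forall e, e \in E -> prime #|e|.
Hypothesis hcyc : forall f, f < size E -> is_cyclic_perm_of (edge E f) (c f).
Local Notation e := (edge E).
Local Notation gate := (gate E).

Definition stride := #|V|.+1.

Definition slot f t := (f * stride + t).+1.

(* After col z, the block slot f 0, ..., slot f (stride - 1) of key z holds the colours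
   along the c f-orbit of gate f z; stride exceeds every edge size. *)
Definition key z i : nat :=
  if i is k.+1 then col (iter (k %% stride).+1 (c (k %/ stride)) (gate (k %/ stride) z))
  else col z.

Lemma edge_card_lt_stride f : #|e f| < stride.
Proof. by rewrite ltnS max_card. Qed.

Lemma key_slot f t z : t < stride -> key z (slot f t) = col (iter t.+1 (c f) (gate f z)).
Proof. by move=> ts; rewrite /key /slot divnMDl // divn_small // addn0 modnMDl modn_small. Qed.

Lemma slot_le f t B : f < B -> t < stride -> slot f t <= B * stride.
Proof.
move=> fB ts; apply: leq_trans (_ : f.+1 * stride <= _); last by rewrite leq_mul2r fB orbT.
by rewrite /slot mulSn addnC ltn_add2r.
Qed.

Lemma lt_slot j f t : t < stride -> j.+1 < slot f t ->
  j %/ stride < f \/ j %/ stride = f /\ j %% stride < t.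
Proof.
move=> ts; rewrite /slot ltnS {1}(divn_eq j stride).
case: (ltngtP (j %/ stride) f) => [jf _ | fj | ->]; [by left | | by rewrite ltn_add2l; right].
rewrite ltnNge => /negP[]; apply: leq_trans (leq_addr _ _).
apply: leq_trans (_ : f.+1 * stride <= _); last by rewrite leq_mul2r fj orbT.
by rewrite mulSn addnC leq_add2r ltnW.
Qed.

Lemma key_eq_upto_slot f t z z' : t < stride -> col z = col z' ->
  (forall g, g < f -> gate g z = gate g z') ->
  (forall i, i < t -> col (iter i.+1 (c f) (gate f z)) = col (iter i.+1 (c f) (gate f z'))) ->
  eq_upto (slot f t) (key z) (key z').
Proof.
move=> ts cz below orbit [|j] // /(lt_slot ts)[jf | [jf jt]]; rewrite /key.
  by rewrite below.
by rewrite jf orbit.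
Qed.

Lemma key_eq_upto_sep B f z z' : col z = col z' -> first_sep E z z' f -> B <= f ->
  eq_upto (B * stride).+1 (key z) (key z').
Proof.
move=> cz [_ below _] Bf [|j] //; rewrite ltnS => jB.
by rewrite /key below // (leq_trans _ Bf) // ltn_divLR.
Qed.

Lemma key_first_diff f z z' : col z = col z' -> first_sep E z z' f ->
  ~ monochromatic col (e f) ->
  exists t, [/\ t < stride, eq_upto (slot f t) (key z) (key z')
              & key z (slot f t) != key z' (slot f t)].
Proof.
move=> cz [fl below nsep] nmono.
have [hz hz'] := (gate_mem htree z fl, gate_mem htree z' fl).
have cnsep : c f (gate f z) != c f (gate f z') by rewrite (inj_eq perm_inj).
have [t [te pre dt]] := prime_cycle_first_diff (hcyc fl) (hprime (mem_nth set0 fl)) nmono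
  (iter_cyclic_perm_mem (hcyc fl) 1 hz) (iter_cyclic_perm_mem (hcyc fl) 1 hz') cnsep.
have ts := ltn_trans te (edge_card_lt_stride f).
exists t; split; rewrite ?key_slot ?iterSr //.
by apply: key_eq_upto_slot => // i /pre; rewrite -!iterSr.
Qed.

(* Applying c f to the two gates shifts the colours along their orbits by one place. *)
Lemma key_shift f t z z' : first_sep E z z' f -> t < stride ->
  (forall i, i < t -> key z (slot f i) = key z' (slot f i)) ->
  key z (slot f t) < key z' (slot f t) ->
  lex_lt (slot f t) (key (c f (gate f z))) (key (c f (gate f z'))).
Proof.
move=> [fl _ nsep] ts pre; rewrite !key_slot //.
have [hu hw] := (gate_mem htree z fl, gate_mem htree z' fl).
have hcu : c f (gate f z) \in e f by rewrite (cyclic_perm_mem (hcyc fl)).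
have hcw : c f (gate f z') \in e f by rewrite (cyclic_perm_mem (hcyc fl)).
have cuw : c f (gate f z) != c f (gate f z') by rewrite (inj_eq perm_inj).
have [_ below _] := first_sep_edge htree fl hcu hcw cuw.
have {}pre i : i < t -> col (iter i.+1 (c f) (gate f z)) = col (iter i.+1 (c f) (gate f z')).
  by move=> it; rewrite -!key_slot ?pre // (ltn_trans it).
case: t ts pre => [|t] ts pre lt; first by exists 0.
exists (slot f t); split; rewrite ?ltnS ?ltn_add2l //.
  apply: (key_eq_upto_slot (ltnW ts) (pre 0 _) below) => // i it.
  by rewrite (gate_id htree fl hcu) (gate_id htree fl hcw) -!iterSr pre.
by rewrite !key_slot ?(ltnW ts) // (gate_id htree fl hcu) (gate_id htree fl hcw) -!iterSr.
Qed.

Lemma compatible_slot_no_descent n (p : {ffun V -> 'I_n}) f t z z' :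
  injective p -> compatible (desH E c p) col p -> p z' = (p z).+1 :> nat ->
  first_sep E z z' f -> t < stride ->
  (forall x y, lex_lt (slot f t) (key x) (key y) -> p x < p y) ->
  eq_upto (slot f t) (key z') (key z) -> ~ key z' (slot f t) < key z (slot f t).
Proof.
move=> pinj comp adj sep ts IH same lt.
have pre i : i < t -> key z' (slot f i) = key z (slot f i).
  by move=> it; rewrite same // ltnS ltn_add2l.
have /IH := key_shift (first_sep_sym sep) ts pre lt.
rewrite -(desH_first_sep htree c pinj adj sep); apply: (comp z z' adj).2.
exact: esym (same 0 isT).
Qed.

End Keys.

Section Proper.
Variables (V : finType) (E : seq {set V}) (c : nat -> {perm V}) (col : V -> nat).
Hypothesis htree : is_hypertree E.
Hypothesis hprime : forall e, e \in E -> prime #|e|.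
Hypothesis hcyc : forall f, f < size E -> is_cyclic_perm_of (edge E f) (c f).
Hypothesis nmono : forall f, f < size E -> ~ monochromatic col (edge E f).
Local Notation key := (key E c col).
Local Notation slot := (slot V).
Let L := (size E * stride V).+1.

Lemma first_sep_exists a b : a != b -> exists f, first_sep E a b f.
Proof.
case: (htree) => _ hc _ ab; case/hc: (ab) => st /andP[ip /eqP eb].
have /= := path_min_edge htree ip; rewrite eb eq_sym => /(_ ab)[sep _ _].
by eexists; exact: sep.
Qed.

Lemma key_lex_total x y : x != y -> lex_lt L (key x) (key y) \/ lex_lt L (key y) (key x).
Proof.
move=> xy; case: (ltngtP (col x) (col y)) => cxy; [by left; exists 0 | by right; exists 0 |].
have [f sep] := first_sep_exists xy; have fl : f < size E by case: sep.
have [t [ts same dt]] := key_first_diff htree hprime hcyc cxy sep (nmono fl).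
have tL : slot f t < L by rewrite ltnS slot_le.
case: (ltngtP (key x (slot f t)) (key y (slot f t))) => lt; last by rewrite lt eqxx in dt.
- by left; exists (slot f t).
- by right; exists (slot f t); split => //; apply: eq_upto_sym.
Qed.

Lemma compatible_lex_rank (p : {ffun V -> 'I_#|V|}) x y :
  injective p -> compatible (desH E c p) col p -> lex_lt L (key x) (key y) -> p x < p y.
Proof.
move=> pinj comp; apply: (lex_lt_rank pinj) => -[|m] _ IH z z' adj same lt.
  by have [cz _] := comp z z' adj; move: lt; rewrite ltnNge cz.
have zz : z != z' := succ_neq (p := fun x => val (p x)) adj.
have cz : col z = col z' := esym (same 0 isT).
have [f sep] := first_sep_exists zz; have fl : f < size E by case: sep.
have [t [ts st dt]] := key_first_diff htree hprime hcyc cz sep (nmono fl).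
have mt : m.+1 = slot f t.
  apply: (first_diff_uniq same) _ (eq_upto_sym st) _; last by rewrite eq_sym.
  by rewrite neq_ltn lt.
by rewrite mt in IH same lt; apply: (compatible_slot_no_descent htree hcyc pinj comp adj sep ts IH same lt).
Qed.

Definition lex_rank x := #|[set y | pbool (lex_lt L (key y) (key x))]|.

Lemma compatible_lex_rankE (p : {ffun V -> 'I_#|V|}) :
  injective p -> compatible (desH E c p) col p -> forall x, p x = lex_rank x :> nat.
Proof.
move=> pinj comp x; rewrite (ffun_ord_rank pinj); apply: eq_card => y; rewrite !inE.
apply/idP/pboolP => [pyx | /(compatible_lex_rank pinj comp) //].
have yx : y != x by apply: contraTneq pyx => ->; rewrite ltnn.
case: (key_lex_total yx) => // /(compatible_lex_rank pinj comp).
by rewrite ltnNge (ltnW pyx).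
Qed.

Lemma lex_rank_lt x : lex_rank x < #|V|.
Proof.
rewrite -cardsT; apply: proper_card; rewrite properT.
by apply/eqP => /setP/(_ x); rewrite !inE => /pboolP/lex_lt_irr.
Qed.

Lemma lex_rank_mono x y : lex_lt L (key x) (key y) -> lex_rank x < lex_rank y.
Proof.
move=> lxy; apply: proper_card; apply/properP; split.
  by apply/subsetP => z; rewrite !inE => /pboolP lzx; apply/pboolP/(lex_lt_trans lzx).
by exists x; rewrite !inE; [apply/pboolP | apply/pboolP/lex_lt_irr].
Qed.

Definition lex_rank_ffun : {ffun V -> 'I_#|V|} := [ffun x => Ordinal (lex_rank_lt x)].

Lemma lex_rank_ffun_inj : injective lex_rank_ffun.
Proof.
move=> x y /(congr1 val); rewrite !ffunE /= => rxy; apply/eqP/negP => /negP xy.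
by case: (key_lex_total xy) => /lex_rank_mono; rewrite rxy ltnn.
Qed.

Lemma lex_rank_compatible : compatible (desH E c lex_rank_ffun) col lex_rank_ffun.
Proof.
move=> z z' adj; have rzz' : lex_rank z' = (lex_rank z).+1 by move: adj; rewrite !ffunE.
have zz : z != z' := succ_neq rzz'.
have lzz : lex_lt L (key z) (key z').
  by case: (key_lex_total zz) => // /lex_rank_mono; rewrite rzz' ltnNge leqnSn.
have le_col : col z <= col z'.
  by case: lzz => -[|i] [_ same lt]; [exact: ltnW | move: (same 0 isT) => /= ->].
split=> // cz; have [f sep] := first_sep_exists zz; have fl : f < size E by case: sep.
have [t [ts same dt]] := key_first_diff htree hprime hcyc cz sep (nmono fl).
have lt := lex_lt_first_diff lzz same dt.
have pre i : i < t -> key z (slot f i) = key z' (slot f i).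
  by move=> it; rewrite same // ltnS ltn_add2l.
have := lex_rank_mono (lex_lt_le (leqW (slot_le fl ts)) (key_shift htree hcyc sep ts pre lt)).
rewrite (desH_first_sep htree c lex_rank_ffun_inj adj sep) !ffunE /=.
by move=> lt' /ltn_trans/(_ lt'); rewrite ltnn.
Qed.

End Proper.

Section NonProper.
Variables (V : finType) (E : seq {set V}) (c : nat -> {perm V}) (col : V -> nat).
Hypothesis htree : is_hypertree E.
Hypothesis hprime : forall e, e \in E -> prime #|e|.
Hypothesis hcyc : forall f, f < size E -> is_cyclic_perm_of (edge E f) (c f).
Local Notation e := (edge E).
Local Notation key := (key E c col).
Local Notation slot := (slot V).

Variable j0 : nat.
Hypothesis j0_lt : j0 < size E.
Hypothesis j0_mono : monochromatic col (e j0).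
Hypothesis j0_min : forall f, f < j0 -> ~ monochromatic col (e f).

Variable p : {ffun V -> 'I_#|V|}.
Hypothesis p_inj : injective p.
Hypothesis p_comp : compatible (desH E c p) col p.

Let M := (j0 * stride V).+1.

(* Below M the key only involves the edges before j0; entry M is the position of
   c j0 (gate j0 z), so that a compatible p must also increase along this key. *)
Definition key_j0 z i := if i == M then val (p (c j0 (gate E j0 z))) else key z i.

Lemma key_j0_lt z i : i < M -> key_j0 z i = key z i.
Proof. by rewrite /key_j0 => /ltn_eqF ->. Qed.

Lemma lex_lt_key_j0 m x y :
  m <= M -> lex_lt m (key x) (key y) -> lex_lt m (key_j0 x) (key_j0 y).
Proof.
move=> mM [i [im same lt]]; have iM := leq_trans im mM.
exists i; split; rewrite ?key_j0_lt // => j ji.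
by rewrite !key_j0_lt ?same // (ltn_trans ji).
Qed.

Lemma key_j0_rank x y : lex_lt M.+1 (key_j0 x) (key_j0 y) -> p x < p y.
Proof.
apply: (lex_lt_rank p_inj) => -[|m] mlt IH z z' adj same lt.
  by have [cz _] := p_comp adj; move: lt; rewrite !key_j0_lt // ltnNge cz.
have zz : z != z' := succ_neq (p := fun x => val (p x)) adj.
have cz : col z = col z' by move: (same 0 isT); rewrite !key_j0_lt.
have [f sep] := first_sep_exists htree zz; have fl : f < size E by case: sep.
case: (ltnP f j0) => [fj | jf].
  have [t [ts st dt]] := key_first_diff htree hprime hcyc cz sep (j0_min fj).
  have tM : slot f t < M by rewrite ltnS slot_le.
  have mt : m.+1 = slot f t.
    apply: (first_diff_uniq same) _ _ _; first by rewrite neq_ltn lt.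
      by move=> i it; rewrite !key_j0_lt ?(st i it) // (ltn_trans it).
    by rewrite !key_j0_lt // eq_sym.
  rewrite mt !key_j0_lt // in lt.
  apply: (compatible_slot_no_descent htree hcyc p_inj p_comp adj sep ts _ _ lt).
    by move=> a b /(lex_lt_key_j0 (ltnW tM)); rewrite -mt; apply: IH.
  by move=> i it; have iM := ltn_trans it tM; rewrite -!key_j0_lt // same // mt.
(* The keys of z and z' agree below M, so their first difference is at the entry M. *)
have low := key_eq_upto_sep c cz sep jf.
have mM : m.+1 = M.
  apply/eqP; rewrite eqn_leq -ltnS mlt leqNgt; apply/negP => mM.
  by move: lt; rewrite !key_j0_lt // low // ltnn.
move: lt; rewrite /key_j0 mM eqxx.
case: (ltngtP j0 f) jf => // [j0f | ->] _.
  by case: sep => _ below _; rewrite below // ltnn.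
rewrite -(desH_first_sep htree c p_inj adj sep).
by apply: (p_comp adj).2.
Qed.

Lemma mono_edge_no_compatible_order : False.
Proof.
have refl : {in e j0 &, forall a b, p (c j0 a) < p (c j0 b) -> p a < p b}.
  move=> a b ha hb lt; apply: key_j0_rank; exists M; split => //.
    have ab : a != b by apply: contraTneq lt => ->; rewrite ltnn.
    move=> i iM; rewrite !key_j0_lt //.
    have := key_eq_upto_sep c (j0_mono ha hb) (first_sep_edge htree j0_lt ha hb ab) (leqnn _).
    by apply.
  by rewrite /key_j0 eqxx !(gate_id htree j0_lt).
apply: (cyclic_perm_not_reflecting (hcyc j0_lt) (edge_card_gt1 htree j0_lt) _ refl).
by move=> a b /val_inj/p_inj.
Qed.

End NonProper.

Section Colourings.
Variables (V : finType) (E : seq {set V}) (m : nat).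

Lemma proper_edge_not_mono (chi : {ffun V -> 'I_m}) : Defs.proper E chi ->
  forall f, f < size E -> ~ monochromatic (fun v => val (chi v)) (edge E f).
Proof.
move=> /allP hp f fl mono; have /exists_inP[x hx /exists_inP[y hy]] := hp _ (mem_nth set0 fl).
by apply/negP; rewrite negbK; apply/eqP/val_inj/mono.
Qed.

Lemma not_proper_min_mono (chi : {ffun V -> 'I_m}) : ~~ Defs.proper E chi ->
  exists j0, [/\ j0 < size E, monochromatic (fun v => val (chi v)) (edge E j0)
               & forall f, f < j0 -> ~ monochromatic (fun v => val (chi v)) (edge E f)].
Proof.
pose monob f := (f < size E) && [forall x in edge E f, forall y in edge E f, chi x == chi y].
have monoP f : monob f -> monochromatic (fun v => val (chi v)) (edge E f).
  by case/andP=> _ /forall_inP H x y hx hy; move/forall_inP: (H x hx) => /(_ y hy)/eqP ->.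
case/allPn => e0 he0 hne; have ex : exists f, monob f.
  exists (index e0 E); rewrite /monob index_mem he0 /edge nth_index //=.
  apply/forall_inP => x hx; apply/forall_inP => y hy; apply: contraR hne => nxy.
  by apply/exists_inP; exists x => //; apply/exists_inP; exists y.
case: (ex_minnP ex) => j0 hj0 j0min; have /andP[j0l _] := hj0.
exists j0; split => // [ | f fj0 mono]; first exact: monoP.
suff /j0min : monob f by rewrite leqNgt fj0.
rewrite /monob (ltn_trans fj0 j0l); apply/forall_inP => x hx; apply/forall_inP => y hy; apply/eqP/val_inj; exact: mono.
Qed.

Lemma fund_ok_compatible (S : nat -> Prop) (p : {ffun V -> 'I_#|V|}) (w : 'I_#|V| -> V)
    (chi : {ffun V -> 'I_m}) : cancel p w -> cancel w p ->
  fund_ok S (map val [tuple chi (w i) | i < #|V|]) <->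
  compatible S (fun v => val (chi v)) p.
Proof.
move=> pw wp; set s := map val _.
have s_p x : nth 0 s (p x) = chi x.
  by rewrite (nth_map (chi x)) ?size_tuple ?ltn_ord // nth_mktuple pw.
split=> [ok z z' adj | comp j].
  have jl : (p z).+1 < size s by rewrite size_map size_tuple -adj ltn_ord.
  have [le lt] := ok _ jl; rewrite -adj !s_p in le lt.
  by split=> // cz /lt; rewrite cz ltnn.
rewrite size_map size_tuple => jl.
have [z pz] : exists z, p z = j :> nat by exists (w (Ordinal (ltnW jl))); rewrite wp.
have [z' pz'] : exists z', p z' = j.+1 :> nat by exists (w (Ordinal jl)); rewrite wp.
have adj : p z' = (p z).+1 :> nat by rewrite pz pz'.
rewrite -pz' -pz !s_p; have [le nd] := comp z z' adj.
by split=> // Sj; rewrite ltn_neqAle le andbT; apply: contraPneq nd => cz; exact.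
Qed.

Lemma Fq_compatible (S : nat -> Prop) (p : {ffun V -> 'I_#|V|}) : injective p ->
  Fq #|V| m S = (\sum_(chi : {ffun V -> 'I_m} | pbool (compatible S (fun v => val (chi v)) p))
                   \prod_(v : V) 'X_(chi v))%R.
Proof.
move=> pinj; have [w pw wp] : bijective p by apply: inj_card_bij pinj _; rewrite card_ord.
pose h (chi : {ffun V -> 'I_m}) : #|V|.-tuple 'I_m := [tuple chi (w i) | i < #|V|].
pose h' (s : #|V|.-tuple 'I_m) : {ffun V -> 'I_m} := [ffun v => tnth s (p v)].
have hK : cancel h h' by move=> chi; apply/ffunP => v; rewrite ffunE tnth_mktuple pw.
have h'K : cancel h' h by move=> s; apply: eq_from_tnth => i; rewrite tnth_mktuple ffunE wp.
rewrite /Fq (reindex h); last by apply: onW_bij; exists h'.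
apply: eq_big => [chi | chi _].
  by have [? ?] := fund_ok_compatible S chi pw wp; apply/pboolP/pboolP.
rewrite big_tuple (reindex w); last by apply: onW_bij; exists p.
by apply: eq_bigr => i _; rewrite tnth_mktuple.
Qed.

End Colourings.

Section CompatibleOrders.
Variables (V : finType) (E : seq {set V}) (c : nat -> {perm V}) (m : nat).
Hypothesis htree : is_hypertree E.
Hypothesis hprime : forall e, e \in E -> prime #|e|.
Hypothesis hcyc : forall f, f < size E -> is_cyclic_perm_of (edge E f) (c f).

Definition compatible_order (chi : {ffun V -> 'I_m}) (p : {ffun V -> 'I_#|V|}) :=
  injectiveb p && pbool (compatible (desH E c p) (fun v => val (chi v)) p).

Lemma proper_compatible_order chi : Defs.proper E chi ->
  compatible_order chi =1 pred1 (lex_rank_ffun E c (fun v => val (chi v))).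
Proof.
move=> /proper_edge_not_mono nmono p /=; set p0 := lex_rank_ffun _ _ _.
have p0_inj : injective p0 := lex_rank_ffun_inj htree hprime hcyc nmono.
have p0_comp := lex_rank_compatible htree hprime hcyc nmono.
apply/andP/eqP => [[/injectiveP pinj /pboolP comp] | ->]; last first.
  by split; [apply/injectiveP | apply/pboolP].
apply/ffunP => x; apply: ord_inj.
by rewrite (compatible_lex_rankE htree hprime hcyc nmono pinj comp)
           (compatible_lex_rankE htree hprime hcyc nmono p0_inj p0_comp).
Qed.

Lemma not_proper_no_compatible_order chi : ~~ Defs.proper E chi ->
  compatible_order chi =1 pred0.
Proof.
case/not_proper_min_mono=> j0 [j0l j0m j0min] p /=.
apply/negP => /andP[/injectiveP pinj /pboolP comp].
exact: (mono_edge_no_compatible_order htree hprime hcyc j0l j0m j0min pinj comp).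
Qed.

End CompatibleOrders.

Local Open Scope ring_scope.

Theorem theorem4p3 (V : finType) (E : seq {set V}) (c : nat -> {perm V}) :
  is_hypertree E ->
  (forall e, e \in E -> prime #|e|) ->
  (forall i : nat, (0 < i < size E)%N ->
     #|(\bigcup_(j < i) edge E j) :&: edge E i| = 1%N) ->
  (forall i : nat, (i < size E)%N -> is_cyclic_perm_of (edge E i) (c i)) ->
  forall m : nat,
    XH E m = \sum_(p : {ffun V -> 'I_#|V|} | injectiveb p) Fq #|V| m (desH E c p).
Proof.
move=> htree hprime _ hcyc m.
pose X (chi : {ffun V -> 'I_m}) : {mpoly int[m]} := \prod_(v : V) 'X_(chi v).
have count chi : \sum_(p | compatible_order E c chi p) X chi = (X chi) *+ Defs.proper E chi.
  case: (boolP (Defs.proper E chi)) => hp.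
    by rewrite (eq_bigl _ _ (proper_compatible_order htree hprime hcyc hp)) big_pred1_eq.
  by rewrite (eq_bigl _ _ (not_proper_no_compatible_order htree hprime hcyc hp)) big_pred0_eq.
transitivity (\sum_chi \sum_(p | compatible_order E c chi p) X chi).
  by rewrite /XH big_mkcond; apply: eq_bigr => chi _; rewrite count mulrb.
under eq_bigr do rewrite big_mkcondr.
rewrite exchange_big; apply: eq_bigr => p /injectiveP pinj.
by rewrite (Fq_compatible _ _ pinj) [RHS]big_mkcond.
Qed.
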